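(* Let $\Theta$ be the set of $p\times p$ positive-definite matrices and assume $\mu_1\ne\mu_2$. For every constant $c>0$, the matrix $A=c(\Sigma_1/n_1+\Sigma_2/n_2)^{-1}$ maximizes $\Delta(A)/\{K_2(A)\}^{1/2}$ over $A\in\Theta$, i.e. $\Delta(A)/\{K_2(A)\}^{1/2}\le \Delta(c(\Sigma_1/n_1+\Sigma_2/n_2)^{-1})/\{K_2(c(\Sigma_1/n_1+\Sigma_2/n_2)^{-1})\}^{1/2}$ for all $A\in\Theta$.
   Context: Two populations on $\mathbb{R}^p$ have mean vectors $\mu_1,\mu_2$ and positive-definite covariance matrices $\Sigma_1,\Sigma_2$; $n_1,n_2$ are positive integers (sample sizes). For positive-definite $A$: $\mu_A=A^{1/2}(\mu_1-\mu_2)$, $\Sigma_{i,A}=A^{1/2}\Sigma_iA^{1/2}$, $\Delta(A)=\|\mu_A\|^2$, $K_2(A)=4\sum_{i=1}^2\mu_A^T\Sigma_{i,A}\mu_A/n_i$. *)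

(* Real scalars: an arbitrary real closed field R (the reals
   are an instance). Vectors in R^p are column vectors 'cV[R]_p. *)
From HB Require Import structures.
From mathcomp Require Import all_boot all_order all_algebra.
Set Implicit Arguments. Unset Strict Implicit. Unset Printing Implicit Defensive.
Import Order.TTheory GRing.Theory Num.Theory.
Local Open Scope ring_scope.

Definition posdef (R : realFieldType) (p : nat) (A : 'M[R]_p) : Prop :=
  A^T = A /\ forall x : 'cV[R]_p, x != 0 -> 0 < (x^T *m A *m x) 0 0.

Definition is_sqrtm (R : realFieldType) (p : nat) (B A : 'M[R]_p) : Prop :=
  posdef B /\ B *m B = A.

Definition sqnorm (R : realFieldType) (p : nat) (v : 'cV[R]_p) : R :=
  \sum_i (v i 0) ^+ 2.

(* Given B = A^{1/2}:  mu_A = A^{1/2}(mu1 - mu2) *)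
Definition muA (R : realFieldType) (p : nat) (B : 'M[R]_p) (mu1 mu2 : 'cV[R]_p)
  : 'cV[R]_p := B *m (mu1 - mu2).

Definition SigmaA (R : realFieldType) (p : nat) (B S : 'M[R]_p) : 'M[R]_p :=
  B *m S *m B.

Definition Delta (R : realFieldType) (p : nat) (B : 'M[R]_p) (mu1 mu2 : 'cV[R]_p)
  : R := sqnorm (muA B mu1 mu2).

Definition K2 (R : realFieldType) (p : nat) (B : 'M[R]_p) (mu1 mu2 : 'cV[R]_p)
  (S1 S2 : 'M[R]_p) (n1 n2 : nat) : R :=
  4 * (((muA B mu1 mu2)^T *m SigmaA B S1 *m muA B mu1 mu2) 0 0 / n1%:R
     + ((muA B mu1 mu2)^T *m SigmaA B S2 *m muA B mu1 mu2) 0 0 / n2%:R).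

(* The objective Delta(A) / K_2(A)^{1/2}, with B = A^{1/2}. *)
Definition deltaK2ratio (R : rcfType) (p : nat) (B : 'M[R]_p) (mu1 mu2 : 'cV[R]_p)
  (S1 S2 : 'M[R]_p) (n1 n2 : nat) : R :=
  Delta B mu1 mu2 / Num.sqrt (K2 B mu1 mu2 S1 S2 n1 n2).

(** With [Sigma := Sigma_1/n_1 + Sigma_2/n_2], [d := mu_1 - mu_2] and [u := A d],
    one has [Delta(A) = d^T u] and [K_2(A) = 4 u^T Sigma u].  The Cauchy-Schwarz
    inequality for the inner product [<x, y> := x^T Sigma y], applied to
    [x := Sigma^{-1} d] and [u], gives [(d^T u)^2 <= (d^T Sigma^{-1} d) (u^T Sigma u)],
    i.e. [Delta(A) / K_2(A)^{1/2} <= (d^T Sigma^{-1} d)^{1/2} / 2], and this bound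
    is attained when [u] is proportional to [Sigma^{-1} d], that is for
    [A = c Sigma^{-1}]. *)

From HB Require Import structures.
From mathcomp Require Import all_boot all_order all_algebra.
From mathcomp Require Import ring.
Import Order.TTheory GRing.Theory Num.Theory.
Local Open Scope ring_scope.
Set Implicit Arguments. Unset Strict Implicit.

Section BilinearForm.

Variables (R : realFieldType) (p : nat).
Implicit Types (S : 'M[R]_p) (x y z : 'cV[R]_p).

Definition qform S x y : R := (x^T *m S *m y) 0 0.

Lemma qformDl S x y z : qform S (x + y) z = qform S x z + qform S y z.
Proof. by rewrite /qform linearD /= !mulmxDl mxE. Qed.

Lemma qformDr S x y z : qform S x (y + z) = qform S x y + qform S x z.
Proof. by rewrite /qform mulmxDr mxE. Qed.

Lemma qformZl S a x y : qform S (a *: x) y = a * qform S x y.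
Proof. by rewrite /qform linearZ /= -!scalemxAl mxE. Qed.

Lemma qformZr S a x y : qform S x (a *: y) = a * qform S x y.
Proof. by rewrite /qform -scalemxAr mxE. Qed.

Lemma qformD S1 S2 x y : qform (S1 + S2) x y = qform S1 x y + qform S2 x y.
Proof. by rewrite /qform mulmxDr mulmxDl mxE. Qed.

Lemma qformZ a S x y : qform (a *: S) x y = a * qform S x y.
Proof. by rewrite /qform -scalemxAr -scalemxAl mxE. Qed.

Lemma qform_conj (M : 'M[R]_p) S x y :
  M^T = M -> qform (M *m S *m M) x y = qform S (M *m x) (M *m y).
Proof. by move=> symM; rewrite /qform trmx_mul symM !mulmxA. Qed.

Lemma qformC S x y : S^T = S -> qform S x y = qform S y x.
Proof.
move=> symS; rewrite /qform.
have -> : (x^T *m S *m y) 0 0 = (x^T *m S *m y)^T 0 0 by rewrite [RHS]mxE.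
by rewrite !trmx_mul trmxK symS mulmxA.
Qed.

Lemma qform_ge0 S x : posdef S -> 0 <= qform S x x.
Proof.
move=> [_ posS]; have [->|x_neq0] := eqVneq x 0; last exact/ltW/posS.
by rewrite /qform mulmx0 mxE.
Qed.

Lemma qform_CauchySchwarz S x y :
  posdef S -> qform S x y ^+ 2 <= qform S x x * qform S y y.
Proof.
move=> posS; have [->|y_neq0] := eqVneq y 0.
  by rewrite /qform !mulmx0 mxE expr0n mulr0.
set a := qform S x x; set b := qform S x y; set k := qform S y y.
have k_gt0 : 0 < k by apply: posS.2.
have expand :
    qform S (k *: x + (- b) *: y) (k *: x + (- b) *: y) = k * (a * k - b ^+ 2).
  rewrite qformDl !qformDr !qformZl !qformZr (qformC y x) -/a -/b -/k; last by case: posS.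
  ring.
by have := qform_ge0 (k *: x + (- b) *: y) posS; rewrite expand pmulr_rge0 // subr_ge0.
Qed.

Lemma posdef_addZ S1 S2 a b :
  posdef S1 -> posdef S2 -> 0 < a -> 0 < b -> posdef (a *: S1 + b *: S2).
Proof.
move=> [symS1 posS1] [symS2 posS2] a_gt0 b_gt0; split.
  by rewrite linearD /= !linearZ /= symS1 symS2.
move=> x x_neq0; rewrite -/(qform _ x x) qformD !qformZ.
by rewrite addr_gt0 ?mulr_gt0 ?posS1 ?posS2.
Qed.

Lemma posdef_unitmx S : posdef S -> S \in unitmx.
Proof.
move=> [_ posS]; rewrite unitmxE unitfE; apply/negP => /det0P [v v_neq0 vS0].
have vT_neq0 : v^T != 0.
  by apply: contra v_neq0 => /eqP/(congr1 trmx); rewrite trmxK trmx0 => ->.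
by have := posS _ vT_neq0; rewrite trmxK vS0 mul0mx mxE ltxx.
Qed.

Lemma qform_invmxl S x y :
  S^T = S -> S \in unitmx -> qform S (invmx S *m x) y = (x^T *m y) 0 0.
Proof.
move=> symS unitS; rewrite /qform trmx_mul trmx_inv symS.
by rewrite -!mulmxA (mulmxA (invmx S)) mulVmx // mul1mx.
Qed.

Lemma qform_invmx S x :
  S^T = S -> S \in unitmx ->
  qform (invmx S) x x = qform S (invmx S *m x) (invmx S *m x).
Proof. by move=> symS unitS; rewrite qform_invmxl // /qform mulmxA. Qed.

Lemma posdef_invmx S : posdef S -> posdef (invmx S).
Proof.
move=> posS; have [symS _] := posS; have unitS := posdef_unitmx posS.
split; first by rewrite trmx_inv symS.
move=> x x_neq0; rewrite -/(qform _ x x) qform_invmx //.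
apply: posS.2; apply: contra x_neq0 => /eqP y0.
by rewrite -[x]mul1mx -(mulmxV unitS) -mulmxA y0 mulmx0.
Qed.

End BilinearForm.

Lemma sqrtr4 (R : rcfType) : Num.sqrt 4 = 2 :> R.
Proof. by rewrite (_ : 4 = 2 ^+ 2) ?sqrtr_sqr ?ger0_norm //; ring. Qed.

Lemma divr_sqrt_le (R : rcfType) (a q k : R) :
  0 <= q -> 0 < k -> a ^+ 2 <= q * k -> a / Num.sqrt (4 * k) <= Num.sqrt q / 2.
Proof.
move=> q_ge0 k_gt0 aqk.
have sk_gt0 : 0 < Num.sqrt k by rewrite sqrtr_gt0.
rewrite sqrtrM // sqrtr4 ler_pdivrMr ?mulr_gt0 //.
have -> : Num.sqrt q / 2 * (2 * Num.sqrt k) = Num.sqrt (q * k).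
  by rewrite sqrtrM //; field.
by rewrite (le_trans (ler_norm a)) // -sqrtr_sqr ler_wsqrtr.
Qed.

Lemma divr_sqrt_opt (R : rcfType) (c q : R) :
  0 < c -> 0 < q -> c * q / Num.sqrt (4 * (c ^+ 2 * q)) = Num.sqrt q / 2.
Proof.
move=> c_gt0 q_gt0.
have sq_gt0 : 0 < Num.sqrt q by rewrite sqrtr_gt0.
rewrite sqrtrM // sqrtrM ?sqr_ge0 // sqrtr4 sqrtr_sqr ger0_norm ?ltW //.
rewrite -{1}(sqr_sqrtr (ltW q_gt0)); field.
by rewrite !gt_eqF.
Qed.

Lemma sqnormE (R : realFieldType) p (v : 'cV[R]_p) : sqnorm v = (v^T *m v) 0 0.
Proof. by rewrite /sqnorm mxE; apply: eq_bigr => i _; rewrite mxE expr2. Qed.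

Section Objective.

Variables (R : rcfType) (p : nat) (mu1 mu2 : 'cV[R]_p) (S1 S2 : 'M[R]_p) (n1 n2 : nat).

Local Notation d := (mu1 - mu2).
Local Notation Sg := ((n1%:R)^-1 *: S1 + (n2%:R)^-1 *: S2).

Lemma Delta_qform (B : 'M[R]_p) : B^T = B -> Delta B mu1 mu2 = qform (B *m B) d d.
Proof.
by move=> symB; rewrite /Delta sqnormE /muA /qform trmx_mul symB !mulmxA.
Qed.

Lemma K2_qform (B : 'M[R]_p) :
  B^T = B -> K2 B mu1 mu2 S1 S2 n1 n2 = 4 * qform Sg (B *m B *m d) (B *m B *m d).
Proof.
move=> symB; rewrite /K2 /SigmaA.
rewrite -/(qform (B *m S1 *m B) _ _) -/(qform (B *m S2 *m B) _ _) qformD !qformZ.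
by rewrite !qform_conj // /muA !mulmxA [_ / n1%:R]mulrC [_ / n2%:R]mulrC.
Qed.

Hypotheses (posS1 : posdef S1) (posS2 : posdef S2) (n1_gt0 : (0 < n1)%N)
  (n2_gt0 : (0 < n2)%N) (mu_neq : mu1 != mu2).

Let posSg : posdef Sg.
Proof. by apply: posdef_addZ; rewrite // invr_gt0 ltr0n. Qed.

Local Notation optimum := (Num.sqrt (qform (invmx Sg) d d) / 2).

Lemma deltaK2ratio_le (A B : 'M[R]_p) :
  posdef A -> is_sqrtm B A -> deltaK2ratio B mu1 mu2 S1 S2 n1 n2 <= optimum.
Proof.
move=> posA [[symB _] BBA]; have [symSg _] := posSg.
have unitSg := posdef_unitmx posSg.
rewrite /deltaK2ratio Delta_qform // K2_qform // BBA.
set u := A *m d.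
have d_neq0 : d != 0 by rewrite subr_eq0.
have dTu : qform A d d = (d^T *m u) 0 0 by rewrite /qform mulmxA.
have u_neq0 : u != 0.
  apply: contraTneq (posA.2 d d_neq0) => u0.
  by rewrite -/(qform _ d d) dTu u0 mulmx0 mxE ltxx.
apply: divr_sqrt_le; first by apply/qform_ge0/posdef_invmx.
  exact: posSg.2.
rewrite dTu -(qform_invmxl _ _ symSg unitSg) qform_invmx //.
exact: qform_CauchySchwarz.
Qed.

Lemma deltaK2ratio_opt (c : R) (B0 : 'M[R]_p) :
  0 < c -> is_sqrtm B0 (c *: invmx Sg) -> deltaK2ratio B0 mu1 mu2 S1 S2 n1 n2 = optimum.
Proof.
move=> c_gt0 [[symB0 _] B0B0]; have [symSg _] := posSg.
have unitSg := posdef_unitmx posSg.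
rewrite /deltaK2ratio Delta_qform // K2_qform // B0B0 -scalemxAl qformZl qformZr.
rewrite -qform_invmx // qformZ [c * (c * _)]mulrA -expr2.
apply: divr_sqrt_opt => //.
by apply: (posdef_invmx posSg).2; rewrite subr_eq0.
Qed.

End Objective.

Theorem propositionS1p1 (R : rcfType) (p : nat) (mu1 mu2 : 'cV[R]_p)
  (S1 S2 : 'M[R]_p) (n1 n2 : nat) (c : R) :
  posdef S1 -> posdef S2 -> (0 < n1)%N -> (0 < n2)%N -> mu1 != mu2 -> 0 < c ->
  forall (A0 B0 : 'M[R]_p),
    A0 = c *: invmx ((n1%:R)^-1 *: S1 + (n2%:R)^-1 *: S2) ->
    is_sqrtm B0 A0 ->
  forall (A B : 'M[R]_p), posdef A -> is_sqrtm B A ->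
    deltaK2ratio B mu1 mu2 S1 S2 n1 n2 <= deltaK2ratio B0 mu1 mu2 S1 S2 n1 n2.
Proof.
move=> posS1 posS2 n1_gt0 n2_gt0 mu_neq c_gt0 A0 B0 -> sqrtB0 A B posA sqrtB.
rewrite (deltaK2ratio_opt posS1 posS2 n1_gt0 n2_gt0 mu_neq c_gt0 sqrtB0).
exact: deltaK2ratio_le posA sqrtB.
Qed.
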